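(* Let $b>0$ and $c>0$, and let $A(b,c)>0$ and $B(b,c)>0$ be defined by $2A(b,c)^2=\sqrt{b^4+c^2}+b^2$ and $2B(b,c)^2=\sqrt{b^4+c^2}-b^2$. Then $$\sum_{n\ge1}\chi(n)\frac{n}{(n^2+b^2)^2+c^2}=\frac{\pi}{4c}\,\frac{\sinh(\frac{\pi}{2}A(b,c))\sin(\frac{\pi}{2}B(b,c))}{\sinh^2(\frac{\pi}{2} A(b,c))+\cos^{2}(\frac{\pi}{2}B(b,c))},$$ $$\sum_{n\ge1}\chi(n)\frac{n(n^2+b^2)}{(n^2+b^2)^2+c^2}=\frac{\pi}{4}\,\frac{\cosh(\frac{\pi}{2}A(b,c))\cos(\frac{\pi}{2}B(b,c))}{\cosh^2(\frac{\pi}{2} A(b,c))-\sin^{2}(\frac{\pi}{2}B(b,c))}.$$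
   Context: The function $\chi$ on integers is $\chi(n)=0$ if $n$ is even, $\chi(n)=1$ if $n\equiv1\pmod 4$, and $\chi(n)=-1$ if $n\equiv 3\pmod 4$. *)

From Stdlib Require Import Reals.
From Coquelicot Require Import Coquelicot.
Open Scope R_scope.

Definition chi (n : nat) : R :=
  match (n mod 4)%nat with
  | 1%nat => 1
  | 3%nat => -1
  | _ => 0
  end.

Definition Abc (b c : R) : R := sqrt ((sqrt (b ^ 4 + c ^ 2) + b ^ 2) / 2).
Definition Bbc (b c : R) : R := sqrt ((sqrt (b ^ 4 + c ^ 2) - b ^ 2) / 2).

From Stdlib Require Import Reals Lra Lia Psatz.
From Coquelicot Require Import Coquelicot.
Open Scope R_scope.

(* For f of class C^2, the cosine coefficients c_j = int_0^(pi/2) f(s) cos((2j+1)s) ds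
   sum to (pi/4) f(0).  Write f(s) = f(0) + k(s) sin s: the f(0) part contributes f(0)
   times Leibniz's series for pi/4, and since 2 sin s cos((2j+1)s) = sin((2j+2)s) - sin(2js)
   the k part telescopes to half of int_0^(pi/2) k(s) sin(2(N+1)s) ds, which is O(1/N)
   because k is Lipschitz.  Apply this to the real and imaginary parts of cosh(zs) with
   z = A + iB, z^2 = b^2 + ic: two integrations by parts give
   c_j = (-1)^j n cosh(pi z/2) / (n^2 + z^2) for n = 2j + 1, and taking real and imaginary
   parts of sum (-1)^j n / (n^2 + z^2) = (pi/4) / cosh(pi z/2) gives both formulas, since
   chi selects exactly the odd n = 2j + 1 with sign (-1)^j. *)

(* Coquelicot states equalities in the carrier of a normed module, on which [ring] and
   [field] do not fire; this retypes such a goal at [R]. *)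
Ltac as_R_eq := match goal with |- ?x = ?y => change (@eq R x y) end.

Lemma sin_cos_odd_half_PI (j : nat) :
  sin (INR (2 * j + 1) * (PI / 2)) = (-1) ^ j /\ cos (INR (2 * j + 1) * (PI / 2)) = 0.
Proof.
  induction j as [|j [IHs IHc]].
  - rewrite Rmult_1_l, sin_PI2, cos_PI2; split; ring.
  - replace (INR (2 * S j + 1) * (PI / 2)) with (INR (2 * j + 1) * (PI / 2) + PI)
      by (replace (2 * S j + 1)%nat with (2 * j + 1 + 2)%nat by lia;
          rewrite (plus_INR _ 2); simpl (INR 2); field).
    rewrite neg_sin, neg_cos, IHs, IHc; split; simpl; ring.
Qed.

Lemma is_series_Leibniz_PI : is_series (fun j => (-1) ^ j / INR (2 * j + 1)) (PI / 4).
Proof.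
  apply is_series_Reals.
  destruct exist_PI as [l Hl] eqn:E.
  replace (PI / 4) with l by (rewrite <- Alt_PI_eq; unfold Alt_PI; rewrite E; field).
  intros eps Heps. destruct (Hl eps Heps) as [N HN].
  exists N; intros n Hn. specialize (HN n Hn).
  erewrite sum_eq; [exact HN|]. intros i _. unfold tg_alt, PI_tg. reflexivity.
Qed.

Lemma is_series_telescoping (u : nat -> R) (l : R) :
  is_lim_seq u l -> is_series (fun n => u (S n) - u n) (l - u O).
Proof.
  intros Hu.
  assert (Hsum : forall N, sum_n (fun n => u (S n) - u n) N = u (S N) - u O).
  { induction N as [|N IH]; [now rewrite sum_O|].
    rewrite sum_Sn, IH. as_R_eq. change (plus ?x ?y) with (x + y). ring. }
  change (is_lim_seq (sum_n (fun n => u (S n) - u n)) (l - u O)).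
  apply (is_lim_seq_ext (fun N => u (S N) - u O)); [intros N; now rewrite Hsum|].
  apply (is_lim_seq_minus' _ _ l (u O)); [now apply is_lim_seq_incr_1 in Hu|apply is_lim_seq_const].
Qed.

Lemma is_series_interleave_zeros (a w : nat -> R) (l : R) :
  (forall j, a (2 * j)%nat = w j) -> (forall j, a (S (2 * j)) = 0) ->
  is_series w l -> is_series a l.
Proof.
  intros Heven Hodd Hw.
  assert (Hsum : forall j, sum_n a (2 * j) = sum_n w j /\ sum_n a (S (2 * j)) = sum_n w j).
  { induction j as [|j [_ IH]].
    - rewrite sum_Sn, !sum_O, (Hodd O), <- (Heven O).
      split; [reflexivity|apply Rplus_0_r].
    - assert (E : sum_n a (2 * S j) = sum_n w (S j)).
      { replace (2 * S j)%nat with (S (S (2 * j))) by lia.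
        rewrite sum_Sn, IH, sum_Sn. f_equal. rewrite <- Heven. f_equal. lia. }
      split; [exact E|]. rewrite sum_Sn, Hodd, E. apply Rplus_0_r. }
  change (is_lim_seq (sum_n a) l).
  apply (is_lim_seq_ext (fun N => sum_n w (Nat.div2 N))).
  - intros N. destruct (Nat.Even_or_Odd N) as [[q ->]|[q ->]].
    + now rewrite Nat.div2_double, (proj1 (Hsum q)).
    + replace (2 * q + 1)%nat with (S (2 * q)) by lia.
      now rewrite Nat.div2_succ_double, (proj2 (Hsum q)).
  - apply (is_lim_seq_subseq (sum_n w) l Nat.div2); [|exact Hw].
    intros P [N HN]. exists (2 * N)%nat. intros n Hn. apply HN.
    pose proof (Nat.div2_odd n). destruct (Nat.odd n); simpl in *; lia.
Qed.

Lemma is_series_lin_comb (a b : nat -> R) (la lb x y : R) :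
  is_series a la -> is_series b lb -> is_series (fun n => x * a n + y * b n) (x * la + y * lb).
Proof.
  intros Ha Hb. exact (is_series_plus _ _ _ _ (is_series_scal x _ _ Ha) (is_series_scal y _ _ Hb)).
Qed.

Lemma is_lim_seq_inv_S (C : R) : is_lim_seq (fun N => C / INR (S N)) 0.
Proof.
  replace (Finite 0) with (Rbar_mult C 0) by (simpl; f_equal; ring).
  apply is_lim_seq_scal_l.
  apply (is_lim_seq_incr_1 (fun n => / INR n)).
  replace (Finite 0) with (Rbar_inv p_infty) by reflexivity.
  apply is_lim_seq_inv; [apply is_lim_seq_INR|discriminate].
Qed.

Lemma is_lim_difference_quotient (f : R -> R) (x l : R) :
  is_derive f x l -> is_lim (fun s => (f s - f x) / (s - x)) x l.
Proof.
  intros Hd. apply is_derive_Reals in Hd.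
  apply is_lim_spec. intros eps.
  destruct (Hd eps (cond_pos eps)) as [d Hdl].
  exists d. intros s Hs Hsx.
  assert (Hh : s - x <> 0) by lra.
  assert (E : x + (s - x) = s) by ring.
  specialize (Hdl (s - x) Hh Hs). now rewrite E in Hdl.
Qed.

Lemma Rle_of_is_derive_nonneg (g dg : R -> R) (a b : R) :
  a <= b -> (forall s, a <= s <= b -> is_derive g s (dg s)) ->
  (forall s, a <= s <= b -> 0 <= dg s) -> g a <= g b.
Proof.
  intros Hab Hd Hpos.
  destruct (MVT_gen g a b dg) as [c [Hc E]];
    rewrite ?Rmin_left, ?Rmax_right in * by lra.
  - intros s Hs. apply Hd. lra.
  - intros s Hs. apply continuity_pt_filterlim, (ex_derive_continuous g s).
    eexists. now apply Hd.
  - specialize (Hpos c Hc). nra.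
Qed.

Lemma ex_RInt_continuous_on (f : R -> R) (a b : R) : a <= b ->
  (forall s, a <= s <= b -> continuous f s) -> ex_RInt f a b.
Proof.
  intros Hab Hf. apply (@ex_RInt_continuous R_CompleteNormedModule).
  rewrite Rmin_left, Rmax_right by exact Hab. exact Hf.
Qed.

Lemma is_RInt_shift_antiperiodic (k w : R -> R) (a h I : R) :
  (forall s, w (s + h) = - w s) ->
  is_RInt (fun s => k s * w s) 0 a I ->
  is_RInt (fun u => k (u - h) * w u) h (a + h) (- I).
Proof.
  intros Hw HI.
  assert (Hlin := is_RInt_comp_lin (fun s => k s * w s) 1 (- h) h (a + h) I).
  replace (1 * h + - h) with 0 in Hlin by ring.
  replace (1 * (a + h) + - h) with a in Hlin by ring.
  apply (is_RInt_ext (fun u => opp (scal 1 (k (1 * u + - h) * w (1 * u + - h))))).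
  - intros u _. replace (1 * u + - h) with (u - h) by ring.
    assert (Hwu : w u = - w (u - h)) by (rewrite <- Hw; f_equal; ring).
    rewrite Hwu.
    change (- (1 * (k (u - h) * w (u - h))) = k (u - h) * - w (u - h)). ring.
  - exact (is_RInt_opp _ _ _ _ (Hlin HI)).
Qed.

Section AntiperiodicIntegral.

Variables (k w : R -> R) (a h : R).
Hypothesis h_bounds : 0 < h <= a.
Hypothesis w_antiperiodic : forall s, w (s + h) = - w s.
Hypothesis w_continuous : forall s, continuous w s.
Hypothesis k_continuous : forall s, 0 <= s <= a -> continuous k s.

Let G := fun s => k s * w s.
Let F := fun u => k (u - h) * w u.

Lemma ex_RInt_antiperiodic x y : 0 <= x <= y -> y <= a -> ex_RInt G x y.
Proof.
  intros Hxy Hy. apply ex_RInt_continuous_on; [lra|]. intros s Hs.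
  exact (continuous_mult k w s (k_continuous s ltac:(lra)) (w_continuous s)).
Qed.

Lemma ex_RInt_antiperiodic_shift x y : h <= x <= y -> y <= a + h -> ex_RInt F x y.
Proof.
  intros Hxy Hy. apply ex_RInt_continuous_on; [lra|]. intros s Hs.
  apply (continuous_mult (fun u => k (u - h)) w s); [|apply w_continuous].
  apply (continuous_comp (fun u => u - h) k s);
    [exact (continuous_minus _ _ s (continuous_id s) (continuous_const h s))|].
  apply k_continuous. lra.
Qed.

(* Antiperiodicity of [w] makes the shifted integral [int_h^(a+h) F] equal to [- int_0^a G]. *)
Lemma RInt_antiperiodic_split :
  2 * RInt G 0 a = RInt G 0 h + RInt (fun s => G s - F s) h a - RInt F a (a + h).
Proof.
  assert (Hshift : RInt F h (a + h) = - RInt G 0 a).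
  { apply (@is_RInt_unique R_CompleteNormedModule), is_RInt_shift_antiperiodic;
      [exact w_antiperiodic|].
    exact (RInt_correct G 0 a (ex_RInt_antiperiodic 0 a ltac:(lra) ltac:(lra))). }
  assert (EG := RInt_Chasles G 0 h a (ex_RInt_antiperiodic 0 h ltac:(lra) ltac:(lra))
                  (ex_RInt_antiperiodic h a ltac:(lra) ltac:(lra))).
  assert (EF := RInt_Chasles F h a (a + h) (ex_RInt_antiperiodic_shift h a ltac:(lra) ltac:(lra))
                  (ex_RInt_antiperiodic_shift a (a + h) ltac:(lra) ltac:(lra))).
  assert (EGF := RInt_minus G F h a (ex_RInt_antiperiodic h a ltac:(lra) ltac:(lra))
                   (ex_RInt_antiperiodic_shift h a ltac:(lra) ltac:(lra))).
  change (plus ?x ?y) with (x + y) in EG, EF. change (minus ?x ?y) with (x - y) in EGF.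
  rewrite EGF. lra.
Qed.

Variables K L : R.
Hypothesis w_bound : forall s, Rabs (w s) <= 1.
Hypothesis k_lipschitz :
  forall u v, 0 <= u <= a -> 0 <= v <= a -> Rabs (k u - k v) <= L * Rabs (u - v).
Hypothesis k_bound : forall u, 0 <= u <= a -> Rabs (k u) <= K.

Lemma abs_RInt_antiperiodic_le :
  Rabs (RInt (fun s => k s * w s) 0 a) <= (2 * K + L * a) * h / 2.
Proof.
  assert (HL0 : 0 <= L * h).
  { pose proof (k_lipschitz h 0 ltac:(lra) ltac:(lra)) as Hh0.
    rewrite Rminus_0_r, (Rabs_right h) in Hh0 by lra.
    pose proof (Rabs_pos (k h - k 0)). lra. }
  assert (B1 : Rabs (RInt G 0 h) <= (h - 0) * K).
  { apply abs_RInt_le_const; [lra|apply ex_RInt_antiperiodic; lra|]. intros t Ht. unfold G.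
    rewrite Rabs_mult. specialize (k_bound t ltac:(lra)). specialize (w_bound t).
    pose proof (Rabs_pos (k t)). nra. }
  assert (B2 : Rabs (RInt F a (a + h)) <= (a + h - a) * K).
  { apply abs_RInt_le_const; [lra|apply ex_RInt_antiperiodic_shift; lra|]. intros t Ht. unfold F.
    rewrite Rabs_mult. specialize (k_bound (t - h) ltac:(lra)). specialize (w_bound t).
    pose proof (Rabs_pos (k (t - h))). nra. }
  assert (B3 : Rabs (RInt (fun s => G s - F s) h a) <= (a - h) * (L * h)).
  { apply abs_RInt_le_const; [lra| |].
    { apply (ex_RInt_minus G F);
        [apply ex_RInt_antiperiodic|apply ex_RInt_antiperiodic_shift]; lra. }
    intros t Ht. unfold G, F.
    replace (k t * w t - k (t - h) * w t) with ((k t - k (t - h)) * w t) by ring.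
    rewrite Rabs_mult. specialize (w_bound t).
    assert (Hd : Rabs (k t - k (t - h)) <= L * h).
    { replace h with (Rabs (t - (t - h))) at 2 by (rewrite Rabs_right; lra).
      apply k_lipschitz; lra. }
    pose proof (Rabs_pos (k t - k (t - h))). nra. }
  apply Rmult_le_reg_l with 2; [lra|].
  rewrite <- (Rabs_right 2) at 1 by lra. fold G.
  rewrite <- Rabs_mult, RInt_antiperiodic_split. unfold Rminus at 1.
  pose proof (Rabs_triang (RInt G 0 h + RInt (fun s => G s - F s) h a) (- RInt F a (a + h))).
  pose proof (Rabs_triang (RInt G 0 h) (RInt (fun s => G s - F s) h a)).
  rewrite Rabs_Ropp in *.
  assert (0 <= h * (L * h)) by (apply Rmult_le_pos; lra). lra.
Qed.

End AntiperiodicIntegral.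

Lemma is_RInt_cos_odd (j : nat) :
  is_RInt (fun s => cos (INR (2 * j + 1) * s)) 0 (PI / 2) ((-1) ^ j / INR (2 * j + 1)).
Proof.
  set (n := INR (2 * j + 1)).
  assert (Hn : 0 < n) by (apply lt_0_INR; lia).
  replace ((-1) ^ j / n) with (minus (sin (n * (PI / 2)) / n) (sin (n * 0) / n))
    by (unfold n; rewrite (proj1 (sin_cos_odd_half_PI j)), Rmult_0_r, sin_0;
        change (@eq R ((-1) ^ j / INR (2 * j + 1) - 0 / INR (2 * j + 1))
                 ((-1) ^ j / INR (2 * j + 1))); field; fold n; lra).
  apply (is_RInt_derive (fun s => sin (n * s) / n)).
  - intros x _. auto_derive; [lra|]. field. lra.
  - intros x _. apply (ex_derive_continuous (fun s => cos (n * s))). auto_derive. easy.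
Qed.

Lemma is_RInt_cos_odd_by_parts (f f1 f2 : R -> R) (j : nat) :
  (forall x, is_derive f x (f1 x)) -> (forall x, is_derive f1 x (f2 x)) ->
  (forall x, continuous f2 x) ->
  is_RInt (fun s => (f2 s + INR (2 * j + 1) ^ 2 * f s) * cos (INR (2 * j + 1) * s)) 0 (PI / 2)
    (INR (2 * j + 1) * (-1) ^ j * f (PI / 2) - f1 0).
Proof.
  intros Hf Hf1 Hf2. set (n := INR (2 * j + 1)).
  destruct (sin_cos_odd_half_PI j) as [Hsin Hcos]. fold n in Hsin, Hcos.
  replace (n * (-1) ^ j * f (PI / 2) - f1 0) with
    (minus (f1 (PI / 2) * cos (n * (PI / 2)) + n * f (PI / 2) * sin (n * (PI / 2)))
           (f1 0 * cos (n * 0) + n * f 0 * sin (n * 0)))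
    by (rewrite (Rmult_0_r n), Hsin, Hcos, cos_0, sin_0;
        change (f1 (PI / 2) * 0 + n * f (PI / 2) * (-1) ^ j - (f1 0 * 1 + n * f 0 * 0) =
                n * (-1) ^ j * f (PI / 2) - f1 0); ring).
  apply (is_RInt_derive (fun s => f1 s * cos (n * s) + n * f s * sin (n * s))).
  - intros x _. auto_derive.
    + repeat split; eexists; [apply Hf1|apply Hf].
    + rewrite (is_derive_unique (fun t : R => f1 t) x _ (Hf1 x)),
        (is_derive_unique (fun t : R => f t) x _ (Hf x)). ring.
  - intros x _. apply (continuous_mult (fun s => f2 s + n ^ 2 * f s) (fun s => cos (n * s))).
    + apply (continuous_plus f2 (fun s => n ^ 2 * f s)); [apply Hf2|].
      apply (continuous_mult (fun _ => n ^ 2) f); [apply continuous_const|].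
      apply (ex_derive_continuous f). eexists. apply Hf.
    + apply (ex_derive_continuous (fun s => cos (n * s))). auto_derive. easy.
Qed.

Definition sin_quotient (f : R -> R) (d0 s : R) : R :=
  if Req_EM_T s 0 then d0 else (f s - f 0) / sin s.

Definition cos_coef (g : R -> R) (n : R) : R := RInt (fun s => g s * cos (n * s)) 0 (PI / 2).

Definition sin_quotient_moment (f : R -> R) (d0 : R) (m : nat) : R :=
  RInt (fun s => sin_quotient f d0 s * sin (INR (2 * m) * s)) 0 (PI / 2).

Section SinQuotient.

Variables f f1 : R -> R.
Hypothesis f_deriv : forall x, is_derive f x (f1 x).

Let k := sin_quotient f (f1 0).
Let moment := sin_quotient_moment f (f1 0).

Lemma continuous_sin_quotient_0 : continuous k 0.
Proof.
  apply continuity_pt_filterlim, continuity_pt_filterlim'.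
  unfold k at 2, sin_quotient. destruct (Req_EM_T 0 0) as [_|]; [|congruence].
  change (is_lim k 0 (f1 0)).
  assert (Hsin := is_lim_difference_quotient sin 0 _ (is_derive_sin 0)).
  rewrite cos_0 in Hsin.
  assert (Hq := is_lim_div _ _ 0 _ _ (is_lim_difference_quotient f 0 _ (f_deriv 0)) Hsin).
  simpl in Hq. rewrite Rinv_1, Rmult_1_r in Hq.
  apply (is_lim_ext_loc (fun s => (f s - f 0) / (s - 0) / ((sin s - sin 0) / (s - 0))));
    [|apply Hq; [intros E; injection E; lra|exact I]].
  exists (mkposreal 1 Rlt_0_1). intros s _ Hs. unfold k, sin_quotient.
  destruct (Req_EM_T s 0) as [|_]; [lra|]. rewrite sin_0, !Rminus_0_r.
  destruct (Req_dec (sin s) 0) as [Hs0|Hs0].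
  - rewrite Hs0, Rdiv_0_l, !Rdiv_0_r. reflexivity.
  - field. split; assumption.
Qed.

Lemma is_derive_sin_quotient x : 0 < x < PI ->
  is_derive k x ((f1 x * sin x - (f x - f 0) * cos x) / sin x ^ 2).
Proof.
  intros Hx.
  assert (Hs : sin x <> 0) by (apply Rgt_not_eq, sin_gt_0; lra).
  apply (is_derive_ext_loc (fun t => (f t - f 0) / sin t)).
  - exists (mkposreal x (proj1 Hx)). intros y Hy. change (Rabs (y - x) < x) in Hy.
    unfold k, sin_quotient. destruct (Req_EM_T y 0) as [->|]; [|reflexivity].
    rewrite Rminus_0_l, Rabs_Ropp, Rabs_right in Hy; lra.
  - auto_derive.
    + repeat split; [eexists; apply f_deriv|exact Hs].
    + rewrite (is_derive_unique (fun t : R => f t) x _ (f_deriv x)). field. exact Hs.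
Qed.

Lemma continuous_sin_quotient x : 0 <= x <= PI / 2 -> continuous k x.
Proof.
  intros Hx. destruct (Req_dec x 0) as [->|Hx0]; [exact continuous_sin_quotient_0|].
  apply (ex_derive_continuous k x). eexists. apply is_derive_sin_quotient.
  pose proof PI_RGT_0. lra.
Qed.

Variables (f2 : R -> R) (M : R).
Hypothesis f1_deriv : forall x, is_derive f1 x (f2 x).
Hypothesis M_bound : forall s, 0 <= s <= PI / 2 -> Rabs (f2 s + f s - f 0) <= M.

Let bound_nonneg : 0 <= M.
Proof. eapply Rle_trans; [apply Rabs_pos|apply (M_bound 0)]. pose proof PI_RGT_0. lra. Qed.

Lemma sin_quotient_numerator_bound x : 0 <= x <= PI / 2 ->
  Rabs (f1 x * sin x - (f x - f 0) * cos x) <= M * (1 - cos x).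
Proof.
  intros Hx.
  assert (Hsigned : forall sg, Rabs sg = 1 ->
    sg * (f1 x * sin x - (f x - f 0) * cos x) <= M * (1 - cos x)).
  { intros sg Hsg.
    set (g := fun s => M * (1 - cos s) - sg * (f1 s * sin s - (f s - f 0) * cos s)).
    enough (Hle : g 0 <= g x) by (unfold g in Hle; rewrite cos_0, sin_0 in Hle; lra).
    apply (Rle_of_is_derive_nonneg g (fun s => (M - sg * (f2 s + f s - f 0)) * sin s));
      [lra| |].
    - intros s _. unfold g. auto_derive.
      + repeat split; eexists; [apply f1_deriv|apply f_deriv].
      + rewrite (is_derive_unique (fun t : R => f1 t) s _ (f1_deriv s)),
          (is_derive_unique (fun t : R => f t) s _ (f_deriv s)). ring.
    - intros s Hs. apply Rmult_le_pos; [|apply sin_ge_0; lra].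
      specialize (M_bound s ltac:(lra)).
      assert (Hb : Rabs (sg * (f2 s + f s - f 0)) <= M) by (rewrite Rabs_mult, Hsg; lra).
      apply Rabs_le_between in Hb. lra. }
  apply Rabs_le. split.
  - assert (Hm1 : Rabs (-1) = 1) by (rewrite Rabs_left; lra).
    specialize (Hsigned (-1) Hm1). lra.
  - specialize (Hsigned 1 Rabs_R1). lra.
Qed.

(* Stated on the closed interval because [MVT_gen] may pick an endpoint; at [y = 0] the
   quotient is Rocq's [0 / 0 = 0]. *)
Lemma sin_quotient_derive_bound y : 0 <= y <= PI / 2 ->
  Rabs ((f1 y * sin y - (f y - f 0) * cos y) / sin y ^ 2) <= M.
Proof.
  intros Hy.
  assert (HM0 := bound_nonneg).
  destruct (Req_dec y 0) as [->|Hy0].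
  - rewrite sin_0. replace (0 ^ 2) with 0 by ring. now rewrite Rdiv_0_r, Rabs_R0.
  - assert (Hs : 0 < sin y) by (apply sin_gt_0; lra).
    assert (Hc : 0 <= cos y) by (apply cos_ge_0; lra).
    assert (Hsc := sin2_cos2 y). unfold Rsqr in Hsc.
    assert (HN := sin_quotient_numerator_bound y Hy).
    assert (Hs2 : 0 < sin y ^ 2) by (simpl; nra).
    rewrite Rabs_div by (apply Rgt_not_eq, Hs2).
    rewrite (Rabs_right (sin y ^ 2)) by lra.
    apply Rle_div_l; [lra|].
    assert (Hc1 : cos y <= 1) by apply COS_bound.
    assert (0 <= M * (cos y * (1 - cos y))) by (apply Rmult_le_pos; [|apply Rmult_le_pos]; lra).
    apply (Rle_trans _ _ _ HN). simpl. nra.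
Qed.

Lemma sin_quotient_lipschitz u v : 0 <= u <= PI / 2 -> 0 <= v <= PI / 2 ->
  Rabs (k u - k v) <= M * Rabs (u - v).
Proof.
  intros Hu Hv. assert (Hpi := PI_RGT_0).
  assert (Hmin : 0 <= Rmin v u) by (apply Rmin_glb; lra).
  assert (Hmax : Rmax v u <= PI / 2) by (apply Rmax_lub; lra).
  destruct (MVT_gen k v u (fun y => (f1 y * sin y - (f y - f 0) * cos y) / sin y ^ 2))
    as [c [Hc ->]].
  - intros x Hx. apply is_derive_sin_quotient. lra.
  - intros x Hx. apply continuity_pt_filterlim, continuous_sin_quotient. lra.
  - rewrite Rabs_mult. apply Rmult_le_compat_r; [apply Rabs_pos|].
    apply sin_quotient_derive_bound. lra.
Qed.


Lemma abs_sin_quotient_le u : 0 <= u <= PI / 2 -> Rabs (k u) <= Rabs (k 0) + M * (PI / 2).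
Proof.
  intros Hu.
  pose proof (sin_quotient_lipschitz u 0 Hu ltac:(pose proof PI_RGT_0; lra)) as Hl.
  rewrite Rminus_0_r, (Rabs_right u) in Hl by lra.
  pose proof (Rabs_triang_inv (k u) (k 0)).
  assert (M * u <= M * (PI / 2)) by (apply Rmult_le_compat_l; [apply bound_nonneg|lra]).
  lra.
Qed.

Lemma sin_quotient_moment_0 : moment O = 0.
Proof.
  unfold moment, sin_quotient_moment.
  rewrite (RInt_ext _ (fun _ => 0)), RInt_const; [apply Rmult_0_r|].
  intros x _. rewrite Rmult_0_l, sin_0. apply Rmult_0_r.
Qed.

Lemma is_RInt_sin_quotient_moment m :
  is_RInt (fun s => k s * sin (INR (2 * m) * s)) 0 (PI / 2) (moment m).
Proof.
  apply (RInt_correct (V := R_CompleteNormedModule)).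
  apply ex_RInt_continuous_on; [pose proof PI_RGT_0; lra|]. intros s Hs.
  apply (continuous_mult k); [apply continuous_sin_quotient; lra|].
  apply (ex_derive_continuous (fun s => sin (INR (2 * m) * s))). auto_derive. easy.
Qed.

Lemma cos_coef_odd_split j :
  cos_coef f (INR (2 * j + 1)) =
  f 0 * ((-1) ^ j / INR (2 * j + 1)) + / 2 * (moment (S j) - moment j).
Proof.
  set (n := INR (2 * j + 1)). assert (Hpi := PI_RGT_0).
  apply (@is_RInt_unique R_CompleteNormedModule).
  change (is_RInt (fun s => f s * cos (n * s)) 0 (PI / 2)
    (plus (scal (f 0) ((-1) ^ j / n)) (scal (/ 2) (minus (moment (S j)) (moment j))))).
  eapply is_RInt_ext;
    [|exact (is_RInt_plus _ _ _ _ _ _ (is_RInt_scal _ _ _ (f 0) _ (is_RInt_cos_odd j))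
               (is_RInt_scal _ _ _ (/ 2) _ (is_RInt_minus _ _ _ _ _ _
                  (is_RInt_sin_quotient_moment (S j)) (is_RInt_sin_quotient_moment j))))].
  intros x Hx. rewrite Rmin_left, Rmax_right in Hx by lra. cbv beta. fold n.
  assert (Hs : 0 < sin x) by (apply sin_gt_0; lra).
  assert (Hk : k x = (f x - f 0) / sin x).
  { unfold k, sin_quotient. destruct (Req_EM_T x 0); [lra|reflexivity]. }
  replace (INR (2 * S j) * x) with (n * x + x)
    by (unfold n; replace (2 * S j)%nat with (S (2 * j + 1)) by lia; rewrite S_INR; ring).
  replace (INR (2 * j) * x) with (n * x - x) by (unfold n; rewrite plus_INR; simpl (INR 1); ring).
  change (f 0 * cos (n * x) + / 2 * (k x * sin (n * x + x) - k x * sin (n * x - x)) =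
          f x * cos (n * x)).
  rewrite Hk, sin_plus, sin_minus. field. lra.
Qed.

Lemma abs_sin_quotient_moment_le N :
  Rabs (moment (S N)) <= (2 * (Rabs (k 0) + M * (PI / 2)) + M * (PI / 2)) * (PI / 4) / INR (S N).
Proof.
  assert (Hpi := PI_RGT_0). set (n := INR (2 * S N)).
  assert (HN : 1 <= INR (S N)) by (apply (le_INR 1); lia).
  assert (Hn : n = 2 * INR (S N)) by (unfold n; rewrite mult_INR; reflexivity).
  replace ((2 * (Rabs (k 0) + M * (PI / 2)) + M * (PI / 2)) * (PI / 4) / INR (S N)) with
    ((2 * (Rabs (k 0) + M * (PI / 2)) + M * (PI / 2)) * (PI / n) / 2) by (rewrite Hn; field; lra).
  apply abs_RInt_antiperiodic_le.
  - split; [apply Rdiv_lt_0_compat; lra|].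
    rewrite Hn. apply Rmult_le_reg_r with (2 * INR (S N)); [lra|]. field_simplify; nra.
  - intros s. fold n. replace (n * (s + PI / n)) with (n * s + PI) by (field; lra). apply neg_sin.
  - intros s. apply (ex_derive_continuous (fun s => sin (n * s))). auto_derive. easy.
  - exact continuous_sin_quotient.
  - intros s. apply Rabs_le, SIN_bound.
  - exact sin_quotient_lipschitz.
  - exact abs_sin_quotient_le.
Qed.

Lemma is_lim_seq_sin_quotient_moment : is_lim_seq moment 0.
Proof.
  apply is_lim_seq_incr_1, is_lim_seq_abs_0.
  eapply is_lim_seq_le_le; [|apply is_lim_seq_const|apply is_lim_seq_inv_S].
  intros N. split; [apply Rabs_pos|apply abs_sin_quotient_moment_le].
Qed.

Lemma is_series_cos_odd_coefficients_of_bound :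
  is_series (fun j => cos_coef f (INR (2 * j + 1))) (PI / 4 * f 0).
Proof.
  eapply is_series_ext; [intros j; symmetry; apply cos_coef_odd_split|].
  replace (PI / 4 * f 0) with (f 0 * (PI / 4) + / 2 * (0 - moment O))
    by (rewrite sin_quotient_moment_0; ring).
  apply is_series_lin_comb;
    [apply is_series_Leibniz_PI|apply is_series_telescoping, is_lim_seq_sin_quotient_moment].
Qed.

End SinQuotient.

Theorem is_series_cos_odd_coefficients (f f1 f2 : R -> R) :
  (forall x, is_derive f x (f1 x)) -> (forall x, is_derive f1 x (f2 x)) ->
  (forall x, continuous f2 x) ->
  is_series (fun j => cos_coef f (INR (2 * j + 1))) (PI / 4 * f 0).
Proof.
  intros Hf Hf1 Hf2. assert (Hpi := PI_RGT_0).
  destruct (continuity_ab_maj (fun s => Rabs (f2 s + f s - f 0)) 0 (PI / 2)) as [m [Hm _]];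
    [lra| |].
  - intros c _. apply continuity_pt_filterlim.
    apply (continuous_comp (fun s => f2 s + f s - f 0) Rabs); [|apply continuous_Rabs].
    apply (continuous_minus (fun s => f2 s + f s)); [|apply continuous_const].
    apply (continuous_plus f2 f); [apply Hf2|].
    apply (ex_derive_continuous f). eexists. apply Hf.
  - exact (is_series_cos_odd_coefficients_of_bound f f1 Hf f2 _ Hf1 Hm).
Qed.

(* Real and imaginary parts of [cosh ((A + i B) s)] and of its first two derivatives. *)
Definition cosh_cos (A B s : R) : R := cosh (s * A) * cos (s * B).
Definition sinh_sin (A B s : R) : R := sinh (s * A) * sin (s * B).
Definition cosh_cos' (A B s : R) : R :=
  A * sinh (s * A) * cos (s * B) - B * cosh (s * A) * sin (s * B).
Definition sinh_sin' (A B s : R) : R :=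
  A * cosh (s * A) * sin (s * B) + B * sinh (s * A) * cos (s * B).
Definition cosh_cos'' (A B s : R) : R :=
  (A ^ 2 - B ^ 2) * cosh_cos A B s - 2 * A * B * sinh_sin A B s.
Definition sinh_sin'' (A B s : R) : R :=
  (A ^ 2 - B ^ 2) * sinh_sin A B s + 2 * A * B * cosh_cos A B s.

Section CoshCos.

Variables A B : R.

Lemma is_derive_cosh_cos s : is_derive (cosh_cos A B) s (cosh_cos' A B s).
Proof. unfold cosh_cos, cosh_cos', cosh, sinh. auto_derive; [easy|field]. Qed.

Lemma is_derive_sinh_sin s : is_derive (sinh_sin A B) s (sinh_sin' A B s).
Proof. unfold sinh_sin, sinh_sin', cosh, sinh. auto_derive; [easy|field]. Qed.

Lemma is_derive_cosh_cos' s : is_derive (cosh_cos' A B) s (cosh_cos'' A B s).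
Proof. unfold cosh_cos'', cosh_cos, sinh_sin, cosh_cos', cosh, sinh. auto_derive; [easy|field]. Qed.

Lemma is_derive_sinh_sin' s : is_derive (sinh_sin' A B) s (sinh_sin'' A B s).
Proof. unfold sinh_sin'', cosh_cos, sinh_sin, sinh_sin', cosh, sinh. auto_derive; [easy|field]. Qed.

Lemma continuous_cosh_cos x : continuous (cosh_cos A B) x.
Proof. apply (ex_derive_continuous (cosh_cos A B)). eexists. apply is_derive_cosh_cos. Qed.

Lemma continuous_sinh_sin x : continuous (sinh_sin A B) x.
Proof. apply (ex_derive_continuous (sinh_sin A B)). eexists. apply is_derive_sinh_sin. Qed.

Lemma continuous_cosh_cos'' x : continuous (cosh_cos'' A B) x.
Proof.
  apply (ex_derive_continuous (cosh_cos'' A B)).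
  unfold cosh_cos'', cosh_cos, sinh_sin, cosh, sinh. auto_derive. easy.
Qed.

Lemma continuous_sinh_sin'' x : continuous (sinh_sin'' A B) x.
Proof.
  apply (ex_derive_continuous (sinh_sin'' A B)).
  unfold sinh_sin'', cosh_cos, sinh_sin, cosh, sinh. auto_derive. easy.
Qed.

End CoshCos.

Lemma cosh_sq_sub_sinh_sq x : cosh x ^ 2 - sinh x ^ 2 = 1.
Proof.
  assert (H : exp x * exp (- x) = 1) by (rewrite <- exp_plus, Rplus_opp_r; apply exp_0).
  unfold cosh, sinh. rewrite <- H. field.
Qed.

Lemma cosh_cos_sq_add_sinh_sin_sq (A B s : R) :
  cosh_cos A B s ^ 2 + sinh_sin A B s ^ 2 = sinh (s * A) ^ 2 + cos (s * B) ^ 2 /\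
  cosh_cos A B s ^ 2 + sinh_sin A B s ^ 2 = cosh (s * A) ^ 2 - sin (s * B) ^ 2.
Proof.
  pose proof (cosh_sq_sub_sinh_sq (s * A)). pose proof (sin2_cos2 (s * B)).
  unfold cosh_cos, sinh_sin, Rsqr in *. split; nra.
Qed.

Lemma cosh_cos_sq_add_sinh_sin_sq_pos (A B s : R) : 0 < A -> 0 < s ->
  0 < cosh_cos A B s ^ 2 + sinh_sin A B s ^ 2.
Proof.
  intros HA Hs. rewrite (proj1 (cosh_cos_sq_add_sinh_sin_sq A B s)).
  assert (0 < sinh (s * A)) by (rewrite <- sinh_0; apply sinh_lt; nra).
  pose proof (pow2_ge_0 (cos (s * B))). simpl in *. nra.
Qed.

Lemma linear_system_2x2 (P Q x y u v : R) : P ^ 2 + Q ^ 2 <> 0 ->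
  P * x - Q * y = u -> Q * x + P * y = v ->
  x = (P * u + Q * v) / (P ^ 2 + Q ^ 2) /\ y = (P * v - Q * u) / (P ^ 2 + Q ^ 2).
Proof. intros HD <- <-. split; field; exact HD. Qed.

Lemma is_RInt_cos_coef (g : R -> R) (n : R) : (forall x, continuous g x) ->
  is_RInt (fun s => g s * cos (n * s)) 0 (PI / 2) (cos_coef g n).
Proof.
  intros Hg. apply (RInt_correct (V := R_CompleteNormedModule)).
  apply ex_RInt_continuous_on; [pose proof PI_RGT_0; lra|]. intros s _.
  apply (continuous_mult g (fun s => cos (n * s))); [apply Hg|].
  apply (ex_derive_continuous (fun s => cos (n * s))). auto_derive. easy.
Qed.

Section CoshCosCoefficients.

Variables (A B : R) (j : nat).

Let n := INR (2 * j + 1).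
Let P := n ^ 2 + A ^ 2 - B ^ 2.
Let Q := 2 * A * B.

Lemma cos_coef_cosh_cos_eq :
  P * cos_coef (cosh_cos A B) n - Q * cos_coef (sinh_sin A B) n =
  n * (-1) ^ j * cosh_cos A B (PI / 2).
Proof.
  assert (Hparts := is_RInt_cos_odd_by_parts _ _ _ j (is_derive_cosh_cos A B)
    (is_derive_cosh_cos' A B) (continuous_cosh_cos'' A B)).
  assert (Hlin := is_RInt_minus _ _ _ _ _ _
    (is_RInt_scal _ _ _ P _ (is_RInt_cos_coef (cosh_cos A B) n (continuous_cosh_cos A B)))
    (is_RInt_scal _ _ _ Q _ (is_RInt_cos_coef (sinh_sin A B) n (continuous_sinh_sin A B)))).
  apply (is_RInt_unique (V := R_CompleteNormedModule)) in Hparts, Hlin.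
  change (minus (scal P ?x) (scal Q ?y)) with (P * x - Q * y) in Hlin.
  replace (cosh_cos' A B 0) with 0 in Hparts
    by (unfold cosh_cos'; rewrite !Rmult_0_l, sinh_0, sin_0; ring).
  fold n in Hparts. rewrite Rminus_0_r in Hparts.
  rewrite <- Hlin, <- Hparts. apply RInt_ext. intros x _.
  as_R_eq. unfold P, Q, cosh_cos''. ring.
Qed.

Lemma cos_coef_sinh_sin_eq :
  Q * cos_coef (cosh_cos A B) n + P * cos_coef (sinh_sin A B) n =
  n * (-1) ^ j * sinh_sin A B (PI / 2).
Proof.
  assert (Hparts := is_RInt_cos_odd_by_parts _ _ _ j (is_derive_sinh_sin A B)
    (is_derive_sinh_sin' A B) (continuous_sinh_sin'' A B)).
  assert (Hlin := is_RInt_plus _ _ _ _ _ _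
    (is_RInt_scal _ _ _ Q _ (is_RInt_cos_coef (cosh_cos A B) n (continuous_cosh_cos A B)))
    (is_RInt_scal _ _ _ P _ (is_RInt_cos_coef (sinh_sin A B) n (continuous_sinh_sin A B)))).
  apply (is_RInt_unique (V := R_CompleteNormedModule)) in Hparts, Hlin.
  change (plus (scal Q ?x) (scal P ?y)) with (Q * x + P * y) in Hlin.
  replace (sinh_sin' A B 0) with 0 in Hparts
    by (unfold sinh_sin'; rewrite !Rmult_0_l, sinh_0, sin_0; ring).
  fold n in Hparts. rewrite Rminus_0_r in Hparts.
  rewrite <- Hlin, <- Hparts. apply RInt_ext. intros x _.
  as_R_eq. unfold P, Q, sinh_sin''. ring.
Qed.

End CoshCosCoefficients.

Lemma odd_denominator_pos (b c : R) (j : nat) : 0 < (INR (2 * j + 1) ^ 2 + b ^ 2) ^ 2 + c ^ 2.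
Proof.
  assert (1 <= INR (2 * j + 1)) by (apply (le_INR 1); lia).
  assert (1 <= INR (2 * j + 1) ^ 2 + b ^ 2) by (pose proof (pow2_ge_0 b); simpl in *; nra).
  pose proof (pow2_ge_0 c). simpl in *. nra.
Qed.

Lemma cos_coef_cosh_cos_sinh_sin (A B b c : R) (j : nat) :
  A ^ 2 - B ^ 2 = b ^ 2 -> 2 * A * B = c ->
  let n := INR (2 * j + 1) in
  let p := cosh_cos A B (PI / 2) in
  let q := sinh_sin A B (PI / 2) in
  cos_coef (cosh_cos A B) n =
    n * (-1) ^ j * ((n ^ 2 + b ^ 2) * p + c * q) / ((n ^ 2 + b ^ 2) ^ 2 + c ^ 2) /\
  cos_coef (sinh_sin A B) n =
    n * (-1) ^ j * ((n ^ 2 + b ^ 2) * q - c * p) / ((n ^ 2 + b ^ 2) ^ 2 + c ^ 2).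
Proof.
  intros Hb Hc n p q.
  assert (HP : n ^ 2 + b ^ 2 = n ^ 2 + A ^ 2 - B ^ 2) by lra.
  destruct (linear_system_2x2 (n ^ 2 + b ^ 2) c (cos_coef (cosh_cos A B) n)
              (cos_coef (sinh_sin A B) n) (n * (-1) ^ j * p) (n * (-1) ^ j * q)) as [Ep Eq].
  - apply Rgt_not_eq, odd_denominator_pos.
  - rewrite HP, <- Hc. apply cos_coef_cosh_cos_eq.
  - rewrite HP, <- Hc. apply cos_coef_sinh_sin_eq.
  - rewrite Ep, Eq. split; unfold Rdiv; ring.
Qed.

(* Real and imaginary parts of [sum_j (-1)^j n / (n^2 + z^2) = (pi/4) / cosh (pi z / 2)],
   [n = 2j + 1], [z = A + iB], [z^2 = b^2 + ic]. *)
Lemma is_series_odd_partial_fractions (A B b c : R) :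
  0 < A -> A ^ 2 - B ^ 2 = b ^ 2 -> 2 * A * B = c ->
  let p := cosh_cos A B (PI / 2) in
  let q := sinh_sin A B (PI / 2) in
  is_series (fun j => (-1) ^ j * (INR (2 * j + 1) * (INR (2 * j + 1) ^ 2 + b ^ 2) /
                                  ((INR (2 * j + 1) ^ 2 + b ^ 2) ^ 2 + c ^ 2)))
    (PI / 4 * p / (p ^ 2 + q ^ 2)) /\
  is_series (fun j => (-1) ^ j * (INR (2 * j + 1) * c /
                                  ((INR (2 * j + 1) ^ 2 + b ^ 2) ^ 2 + c ^ 2)))
    (PI / 4 * q / (p ^ 2 + q ^ 2)).
Proof.
  intros HA Hb Hc p q.
  assert (Hp := is_series_cos_odd_coefficients _ _ _
    (is_derive_cosh_cos A B) (is_derive_cosh_cos' A B) (continuous_cosh_cos'' A B)).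
  assert (Hq := is_series_cos_odd_coefficients _ _ _
    (is_derive_sinh_sin A B) (is_derive_sinh_sin' A B) (continuous_sinh_sin'' A B)).
  replace (cosh_cos A B 0) with 1 in Hp
    by (unfold cosh_cos; rewrite !Rmult_0_l, cosh_0, cos_0; ring).
  replace (sinh_sin A B 0) with 0 in Hq
    by (unfold sinh_sin; rewrite !Rmult_0_l, sinh_0, sin_0; ring).
  assert (HW : p ^ 2 + q ^ 2 <> 0).
  { apply Rgt_not_eq, cosh_cos_sq_add_sinh_sin_sq_pos; [exact HA|pose proof PI_RGT_0; lra]. }
  split.
  - replace (PI / 4 * p / (p ^ 2 + q ^ 2)) with
      (p / (p ^ 2 + q ^ 2) * (PI / 4 * 1) + q / (p ^ 2 + q ^ 2) * (PI / 4 * 0))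
      by (field; exact HW).
    eapply is_series_ext; [|exact (is_series_lin_comb _ _ _ _ _ _ Hp Hq)].
    intros j. destruct (cos_coef_cosh_cos_sinh_sin A B b c j Hb Hc) as [-> ->].
    as_R_eq.
    unfold p, q in *. field. split; [apply Rgt_not_eq, odd_denominator_pos|exact HW].
  - replace (PI / 4 * q / (p ^ 2 + q ^ 2)) with
      (q / (p ^ 2 + q ^ 2) * (PI / 4 * 1) + - (p / (p ^ 2 + q ^ 2)) * (PI / 4 * 0))
      by (field; exact HW).
    eapply is_series_ext; [|exact (is_series_lin_comb _ _ _ _ _ _ Hp Hq)].
    intros j. destruct (cos_coef_cosh_cos_sinh_sin A B b c j Hb Hc) as [-> ->].
    as_R_eq.
    unfold p, q in *. field. split; [apply Rgt_not_eq, odd_denominator_pos|exact HW].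
Qed.

Lemma chi_odd j : chi (S (2 * j)) = (-1) ^ j.
Proof.
  destruct (Nat.Even_or_Odd j) as [[q ->]|[q ->]]; unfold chi.
  - replace (S (2 * (2 * q)) mod 4)%nat with 1%nat by (apply Nat.mod_unique with q; lia).
    now rewrite pow_1_even.
  - replace (S (2 * (2 * q + 1)) mod 4)%nat with 3%nat by (apply Nat.mod_unique with q; lia).
    replace (2 * q + 1)%nat with (S (2 * q)) by lia. now rewrite pow_1_odd.
Qed.

Lemma chi_even j : chi (S (S (2 * j))) = 0.
Proof.
  destruct (Nat.Even_or_Odd j) as [[q ->]|[q ->]]; unfold chi.
  - now replace (S (S (2 * (2 * q))) mod 4)%nat with 2%nat
      by (apply Nat.mod_unique with q; lia).
  - now replace (S (S (2 * (2 * q + 1))) mod 4)%nat with 0%nat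
      by (apply Nat.mod_unique with (S q); lia).
Qed.

Lemma is_series_chi (g : R -> R) (l : R) :
  is_series (fun j => (-1) ^ j * g (INR (2 * j + 1))) l ->
  is_series (fun n => chi (S n) * g (INR (S n))) l.
Proof.
  apply is_series_interleave_zeros.
  - intros j. rewrite chi_odd. do 3 f_equal. lia.
  - intros j. rewrite chi_even. apply Rmult_0_l.
Qed.

Lemma Abc_Bbc_spec (b c : R) : b <> 0 -> 0 <= c ->
  0 < Abc b c /\ Abc b c ^ 2 - Bbc b c ^ 2 = b ^ 2 /\ 2 * Abc b c * Bbc b c = c.
Proof.
  intros hb hc. unfold Abc, Bbc.
  set (s := sqrt (b ^ 4 + c ^ 2)).
  assert (Hb2 : 0 < b ^ 2) by (apply pow2_gt_0, hb).
  assert (Hs0 : 0 <= s) by apply sqrt_pos.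
  assert (Hs2 : s * s = b ^ 4 + c ^ 2) by (apply sqrt_sqrt; nra).
  assert (Hsb : b ^ 2 <= s) by nra.
  assert (HA2 : sqrt ((s + b ^ 2) / 2) ^ 2 = (s + b ^ 2) / 2) by (apply pow2_sqrt; lra).
  assert (HB2 : sqrt ((s - b ^ 2) / 2) ^ 2 = (s - b ^ 2) / 2) by (apply pow2_sqrt; lra).
  assert (HA : 0 < sqrt ((s + b ^ 2) / 2)) by (apply sqrt_lt_R0; lra).
  assert (HB : 0 <= sqrt ((s - b ^ 2) / 2)) by apply sqrt_pos.
  set (A := sqrt ((s + b ^ 2) / 2)) in *. set (B := sqrt ((s - b ^ 2) / 2)) in *.
  split; [exact HA|split; [lra|]].
  apply Rsqr_inj; [apply Rmult_le_pos; lra|exact hc|].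
  unfold Rsqr. replace (2 * A * B * (2 * A * B)) with (4 * A ^ 2 * B ^ 2) by ring.
  rewrite HA2, HB2. replace (b ^ 4) with (b ^ 2 * b ^ 2) in Hs2 by ring. nra.
Qed.


Theorem lemma2p1 (b c : R) (hb : 0 < b) (hc : 0 < c) :
  is_series
    (fun n : nat => chi (S n) * INR (S n) /
       ((INR (S n) ^ 2 + b ^ 2) ^ 2 + c ^ 2))
    (PI / (4 * c) *
     (sinh (PI / 2 * Abc b c) * sin (PI / 2 * Bbc b c) /
      (sinh (PI / 2 * Abc b c) ^ 2 + cos (PI / 2 * Bbc b c) ^ 2)))
  /\
  is_series
    (fun n : nat => chi (S n) * INR (S n) * (INR (S n) ^ 2 + b ^ 2) /
       ((INR (S n) ^ 2 + b ^ 2) ^ 2 + c ^ 2))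
    (PI / 4 *
     (cosh (PI / 2 * Abc b c) * cos (PI / 2 * Bbc b c) /
      (cosh (PI / 2 * Abc b c) ^ 2 - sin (PI / 2 * Bbc b c) ^ 2))).
Proof.
  destruct (Abc_Bbc_spec b c ltac:(lra) ltac:(lra)) as [HA [HAB2 HAB]].
  pose proof (is_series_odd_partial_fractions _ _ b c HA HAB2 HAB) as Hsum.
  destruct (cosh_cos_sq_add_sinh_sin_sq (Abc b c) (Bbc b c) (PI / 2)) as [HW1 HW2].
  cbv zeta in Hsum. destruct Hsum as [Hre Him]. rewrite HW2 in Hre. rewrite HW1 in Him.
  unfold cosh_cos, sinh_sin in Hre, Him.
  set (x := PI / 2 * Abc b c) in *. set (y := PI / 2 * Bbc b c) in *.
  split.
  - eapply is_series_ext;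
      [|apply (is_series_chi (fun t => t / ((t ^ 2 + b ^ 2) ^ 2 + c ^ 2)))].
    { intros n. as_R_eq. unfold Rdiv. ring. }
    replace (PI / (4 * c) * _) with (/ c * (PI / 4 * (sinh x * sin y) / (sinh x ^ 2 + cos y ^ 2)))
      by (unfold Rdiv; rewrite Rinv_mult; ring).
    eapply is_series_ext; [|exact (is_series_scal (/ c) _ _ Him)].
    intros j. as_R_eq. cbv beta. change (scal (/ c) ?t) with (/ c * t).
    field. split; [apply Rgt_not_eq, odd_denominator_pos|lra].
  - eapply is_series_ext;
      [|apply (is_series_chi (fun t => t * (t ^ 2 + b ^ 2) / ((t ^ 2 + b ^ 2) ^ 2 + c ^ 2)))].
    { intros n. as_R_eq. unfold Rdiv. ring. }
    replace (PI / 4 * _) with (PI / 4 * (cosh x * cos y) / (cosh x ^ 2 - sin y ^ 2))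
      by (unfold Rdiv; ring).
    exact Hre.
Qed.
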